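(* Let $k\ge 2$ and $\ell_1\ge \ell_2\ge\cdots\ge \ell_k\ge 0$ be integers, let $B=B(\ell_1,\dots,\ell_k)$ and $n=2k+\sum_{i=1}^k\ell_i$. Then for every integer $t\ge 1$, \[(t-1)(k+\ell_1)+n+k(k-2)\le \hat r(tK_2,B)\le n+(t-1)\ell_1+(k+t-1)^2-2k.\]
   Context: All graphs are finite and simple. For integers $k\ge 2$ and $\ell_1\ge\cdots\ge\ell_k\ge0$, $B(\ell_1,\dots,\ell_k)$ is the graph obtained from the complete bipartite graph $K_{k,k}$ by attaching $\ell_i$ pendant edges (each to a new leaf vertex) to the $i$-th vertex of one fixed part of the bipartition, for $i=1,\dots,k$. $tK_2$ is a matching with $t$ edges. For graphs $F,G,H$, $F\to(G,H)$ means every red--blue coloring of $E(F)$ contains a red copy of $G$ or a blue copy of $H$, and $\hat r(G,H)=\min\{|E(F)|:F\to(G,H)\}$. *)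

From mathcomp Require Import all_boot.
Set Implicit Arguments. Unset Strict Implicit. Unset Printing Implicit Defensive.

Definition simple_graph (V : finType) (e : rel V) : Prop :=
  (forall u v, e u v = e v u) /\ (forall v, ~~ e v v).

Definition edge_set (V : finType) (e : rel V) : {set {set V}} :=
  [set E : {set V} | [exists u, exists v, e u v && (E == [set u; v])]].

Definition nedges (V : finType) (e : rel V) : nat := #|edge_set e|.

Definition has_copy (W : finType) (g : rel W) (V : finType) (h : rel V) : Prop :=
  exists f : W -> V, injective f /\ forall u v, g u v -> h (f u) (f v).

(* A red-blue colouring of E(F) is a map c from unordered pairs to bool
   (true = red, false = blue); only its values on edges matter. *)
Definition red_part (V : finType) (e : rel V) (c : {set V} -> bool) : rel V :=
  fun u v => e u v && c [set u; v].
Definition blue_part (V : finType) (e : rel V) (c : {set V} -> bool) : rel V :=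
  fun u v => e u v && ~~ c [set u; v].

Definition arrows (V : finType) (e : rel V)
  (W1 : finType) (g : rel W1) (W2 : finType) (h : rel W2) : Prop :=
  forall c : {set V} -> bool, has_copy g (red_part e c) \/ has_copy h (blue_part e c).

(* tK_2: vertices (i, b), edge iff same i and different b. *)
Definition matching_rel (t : nat) : rel ('I_t * bool) :=
  fun x y => (x.1 == y.1) && (x.2 != y.2).

(* B(l_0, ..., l_{k-1}): K_{k,k} with parts inl (inl i) ("fixed part") and
   inl (inr j), plus l i pendant leaves (inr (existT i a)) at inl (inl i). *)
Definition Bvert (k : nat) (l : nat -> nat) : finType :=
  ('I_k + 'I_k + {i : 'I_k & 'I_(l i)})%type.

Definition Bbase (k : nat) (l : nat -> nat) (x y : Bvert k l) : bool :=
  match x, y with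
  | inl (inl _), inl (inr _) => true
  | inl (inl i), inr p => tag p == i
  | _, _ => false
  end.

Definition B_rel (k : nat) (l : nat -> nat) : rel (Bvert k l) :=
  fun x y => Bbase x y || Bbase y x.
Arguments matching_rel t : clear implicits.
Arguments B_rel k l : clear implicits.

(* Lower bound: colouring every edge blue shows that F contains B, hence has at least
   e(B) = n + k(k-2) edges and a vertex of degree at least k + l_1.  Colouring red the
   edges at a vertex v of maximum degree shows F - v -> ((t-1)K_2, B), and induction on t
   adds k + l_1 edges per step.
   Upper bound: F = B(l_1, ..., l_1, l_1, ..., l_k), with t - 1 extra fixed vertices, works.
   Greedily grow a red matching of edges leaving the fixed part.  If it stops with at most
   t - 1 edges, send the i-th fixed vertex of B to the i-th unmatched fixed vertex of F,
   whose index is at most i + t - 1, so that it carries at least l_i leaves; all edges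
   between unmatched vertices are blue. *)

From mathcomp Require Import all_boot zify.
Set Implicit Arguments. Unset Strict Implicit. Unset Printing Implicit Defensive.

Lemma edge_setP (V : finType) (e : rel V) (E : {set V}) :
  reflect (exists u v, e u v /\ E = [set u; v]) (E \in edge_set e).
Proof.
rewrite inE; apply: (iffP existsP) => [[u /existsP [v /andP [euv /eqP ->]]]|].
  by exists u, v.
by case=> u [v [euv ->]]; exists u; apply/existsP; exists v; rewrite euv eqxx.
Qed.

Lemma edge_set_mem (V : finType) (e : rel V) u v : e u v -> [set u; v] \in edge_set e.
Proof. by move=> euv; apply/edge_setP; exists u, v. Qed.

Lemma has_copy_subrel (W V : finType) (g : rel W) (h h' : rel V) :
  has_copy g h -> (forall u v, h u v -> h' u v) -> has_copy g h'.
Proof. by move=> [f [f_inj fh]] hh'; exists f; split=> // u v /fh /hh'. Qed.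

Lemma nedges_copy (W V : finType) (g : rel W) (h : rel V) :
  has_copy g h -> nedges g <= nedges h.
Proof.
case=> f [f_inj fh]; rewrite /nedges -(card_imset _ (imset_inj f_inj)).
apply/subset_leq_card/subsetP => _ /imsetP [_ /edge_setP [u [v [guv ->]]] ->].
by rewrite imsetU !imset_set1 edge_set_mem // fh.
Qed.

Definition deg (V : finType) (e : rel V) (v : V) : nat := #|[set u | e v u]|.

Lemma deg_copy (W V : finType) (g : rel W) (h : rel V) (f : W -> V) :
  injective f -> (forall u v, g u v -> h (f u) (f v)) ->
  forall w, deg g w <= deg h (f w).
Proof.
move=> f_inj fh w; rewrite /deg -(card_imset _ f_inj).
by apply/subset_leq_card/subsetP => x /imsetP [u]; rewrite !inE => /fh guv ->.
Qed.

Lemma arrows_copy (V : finType) (e : rel V) (W : finType) (h : rel W) t :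
  arrows e (matching_rel t.+1) h -> has_copy h e.
Proof.
case/(_ (fun _ => false)) => [[g [_ gh]]|].
  by have := gh (ord0, false) (ord0, true); rewrite /red_part andbF => /(_ isT).
by move/has_copy_subrel; apply=> u v /andP [].
Qed.

Section VertexDeletion.
Variables (V : finType) (v : V).

Definition rem_rel (r : rel V) : rel {x : V | x != v} := fun x y => r (val x) (val y).

Lemma preimset_rem (a b : {x : V | x != v}) :
  [set z : {x : V | x != v} | val z \in [set val a; val b]] = [set a; b].
Proof. by apply/setP => z; rewrite !inE !val_eqE. Qed.

Lemma simple_graph_rem (e : rel V) : simple_graph e -> simple_graph (rem_rel e).
Proof. by case=> e_sym e_irr; split=> [x y|x]; [apply: e_sym|apply: e_irr]. Qed.

Lemma card_edges_at (e : rel V) :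
  simple_graph e -> #|[set E in edge_set e | v \in E]| = deg e v.
Proof.
case=> e_sym e_irr.
have -> : [set E in edge_set e | v \in E] = (fun u => [set v; u]) @: [set u | e v u].
  apply/setP => E; rewrite in_set; apply/andP/imsetP => [[/edge_setP [a [b [eab ->]]]]|].
    rewrite !inE => /orP [] /eqP ?; subst; first by exists b; rewrite ?inE.
    by exists a; rewrite ?inE 1?e_sym // setUC.
  by case=> u; rewrite inE => evu ->; rewrite edge_set_mem // !inE eqxx.
apply: card_in_imset => a b; rewrite !inE => eva evb /setP/(_ a).
rewrite !inE eqxx orbT => /esym/orP [/eqP av|/eqP //].
by move: eva; rewrite av (negbTE (e_irr v)).
Qed.

Lemma card_edges_off (e : rel V) :
  #|[set E in edge_set e | v \notin E]| = nedges (rem_rel e).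
Proof.
rewrite /nedges -(card_imset _ (imset_inj val_inj)); apply: eq_card => E.
rewrite in_set; apply/andP/imsetP => [[/edge_setP [a [b [eab ->]]]]|].
  rewrite !inE negb_or ![v == _]eq_sym => /andP [av bv].
  exists [set (exist _ a av : {x : V | x != v}); exist _ b bv]; last by rewrite imsetU !imset_set1.
  exact: edge_set_mem.
case=> _ /edge_setP [a [b [eab ->]]] ->; rewrite imsetU !imset_set1 edge_set_mem //.
by rewrite !inE negb_or ![v == _]eq_sym (valP a) (valP b).
Qed.

Lemma nedges_rem (e : rel V) :
  simple_graph e -> nedges e = deg e v + nedges (rem_rel e).
Proof.
move=> se; rewrite -card_edges_at // -card_edges_off /nedges.
rewrite -(cardsID [set E : {set V} | v \in E] (edge_set e)).
by congr (_ + _); apply: eq_card => E; rewrite !inE andbC.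
Qed.

Lemma matching_copy_rem (r : rel V) t :
  has_copy (matching_rel t.+1) r -> has_copy (matching_rel t) (rem_rel r).
Proof.
case=> g [g_inj gr].
have [i0 g_v] : exists i0 : 'I_t.+1, forall i b, g (i, b) = v -> i = i0.
  case: (pickP (fun ib => g ib == v)) => [[i b] /eqP gib|none].
    by exists i => i' b' gi'b'; have [] := g_inj (i', b') (i, b) (etrans gi'b' (esym gib)).
  by exists ord0 => i b /eqP; rewrite none.
have gv i b : g (lift i0 i, b) != v.
  by apply/eqP => /g_v/eqP; rewrite eq_sym (negbTE (neq_lift _ _)).
exists (fun ib => exist _ (g (lift i0 ib.1, ib.2)) (gv ib.1 ib.2) : {x : V | x != v}); split.
  move=> [i b] [i' b'] /(congr1 val) /= /g_inj /eqP.
  by rewrite xpair_eqE => /andP [/eqP/lift_inj -> /eqP ->].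
move=> [i b] [i' b'] /andP [/= /eqP <- bb']; apply: gr.
by rewrite /matching_rel /= eqxx.
Qed.

Lemma copy_rem (W : finType) (g : rel W) (r : rel V) :
  (forall x, exists y, g x y) -> (forall u, ~~ r v u) ->
  has_copy g r -> has_copy g (rem_rel r).
Proof.
move=> g_nbr r_v [f [f_inj fr]].
have fv x : f x != v.
  by apply/eqP => fxv; have [y /fr] := g_nbr x; rewrite fxv (negbTE (r_v _)).
exists (fun x => exist _ (f x) (fv x) : {x : V | x != v}); split; last exact: fr.
by move=> x y /(congr1 val) /f_inj.
Qed.

End VertexDeletion.
Arguments rem_rel {V} v r.

Lemma arrows_rem (V : finType) (e : rel V) (v : V) (W : finType) (h : rel W) t :
  (forall x, exists y, h x y) ->
  arrows e (matching_rel t.+1) h -> arrows (rem_rel v e) (matching_rel t) h.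
Proof.
move=> h_nbr eh c'.
pose c (E : {set V}) := (v \in E) || c' [set z : {x : V | x != v} | val z \in E].
have c_rem (x y : {x : V | x != v}) : c [set val x; val y] = c' [set x; y].
  by rewrite /c !inE ![v == _]eq_sym (negbTE (valP x)) (negbTE (valP y)) preimset_rem.
have no_blue_at_v u : ~~ blue_part e c v u by rewrite /blue_part /c !inE eqxx andbF.
case: (eh c) => [/(matching_copy_rem v) red|/(copy_rem h_nbr no_blue_at_v) blue].
  by left; move/has_copy_subrel: red; apply=> x y; rewrite /rem_rel /red_part c_rem.
by right; move/has_copy_subrel: blue; apply=> x y; rewrite /rem_rel /blue_part c_rem.
Qed.

Lemma nedges_arrows (W : finType) (h : rel W) (w : W) :
  (forall x, exists y, h x y) ->
  forall t (V : finType) (e : rel V), simple_graph e ->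
  arrows e (matching_rel t.+1) h -> t * deg h w + nedges h <= nedges e.
Proof.
move=> h_nbr; elim=> [|t IH] V e se eh.
  by rewrite mul0n; apply: nedges_copy (arrows_copy eh).
have [f [f_inj fe]] := arrows_copy eh.
have [v _ v_max] := @arg_maxnP _ (f w) xpredT (deg e) isT.
have deg_v : deg h w <= deg e v := leq_trans (deg_copy f_inj fe w) (v_max _ isT).
have := IH _ _ (simple_graph_rem v se) (arrows_rem (v := v) h_nbr eh).
by rewrite (nedges_rem v se) mulSn; lia.
Qed.

Section BGraph.
Variables (k : nat) (l : nat -> nat).

Lemma B_relC (x y : Bvert k l) : B_rel k l x y = B_rel k l y x.
Proof. exact: orbC. Qed.

Lemma simple_graph_B : simple_graph (B_rel k l).
Proof. by split=> [x y|[[i|i]|p]]; first exact: B_relC. Qed.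

Lemma B_nbr (x : Bvert k l) : exists y, B_rel k l x y.
Proof.
case: x => [[i|j]|p]; first by exists (inl (inr i)).
  by exists (inl (inl j)).
by exists (inl (inl (tag p))); rewrite /B_rel /= eqxx.
Qed.

Lemma leq_deg_B (i : 'I_k) : k + l i <= deg (B_rel k l) (inl (inl i)).
Proof.
pose nbr (z : 'I_k + 'I_(l i)) : Bvert k l :=
  match z with inl j => inl (inr j) | inr a => inr (Tagged _ a) end.
have nbr_inj : injective nbr.
  move=> [j|a] [j'|a'] //= [] // => [->|aa'] //.
  by rewrite (eq_from_Tagged aa').
rewrite -[k in k + _]card_ord -[l i]card_ord -card_sum -(card_imset _ nbr_inj).
apply/subset_leq_card/subsetP => _ /imsetP [[j|a] _ ->]; rewrite inE //.
by rewrite /B_rel /= eqxx.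
Qed.

Definition B_edge (x : ('I_k * 'I_k) + {i : 'I_k & 'I_(l i)}) : {set Bvert k l} :=
  match x with
  | inl (i, j) => [set inl (inl i); inl (inr j)]
  | inr p => [set inl (inl (tag p)); inr p]
  end.

Lemma B_edge_inj : injective B_edge.
Proof.
move=> [[i j]|p] [[i' j']|p'] /= /setP E.
- have := E (inl (inl i)); have := E (inl (inr j)); rewrite !inE /= !eqxx /= ?orbF.
  by move=> /esym/eqP [->] /esym/eqP [->].
- by have := E (inl (inr j)); rewrite !inE /= eqxx.
- by have := E (inr p); rewrite !inE /= eqxx.
- by have := E (inr p); rewrite !inE /= eqxx /= => /esym/eqP [->].
Qed.

Lemma edge_set_B : edge_set (B_rel k l) = B_edge @: setT.
Proof.
apply/setP => E; apply/edge_setP/imsetP => [[u [v [+ ->]]]|].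
  rewrite /B_rel => /orP []; last rewrite setUC; [move: u v|move: v u];
    by move=> [[i|i]|p] // [[j|j]|q] //= => [_|/eqP <-];
      [exists (inl (i, j))|exists (inr q)]; rewrite ?inE.
case=> [[[i j]|p]] _ ->; first by exists (inl (inl i)), (inl (inr j)).
by exists (inl (inl (tag p))), (inr p); rewrite /B_rel /= eqxx.
Qed.

Lemma nedges_B : nedges (B_rel k l) = k * k + \sum_(i < k) l i.
Proof.
rewrite /nedges edge_set_B card_imset ?cardsT; last exact: B_edge_inj.
rewrite card_sum card_prod card_tagged !card_ord sumnE big_map big_enum /=.
by under eq_bigr do rewrite card_ord.
Qed.

End BGraph.

Lemma nth_filter_iota_le (P : pred nat) m n i :
  i < size [seq x <- iota m n | P x] ->
  nth 0 [seq x <- iota m n | P x] i <= m + i + count (predC P) (iota m n).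
Proof.
elim: n m i => [|n IH] m i //=.
case: (P m) => /=; last by move/IH; lia.
by case: i => [|i] /=; [lia|move/IH; lia].
Qed.

Lemma exists_inj_avoiding k K (S : seq 'I_K) :
  k + size S <= K ->
  exists phi : 'I_k -> 'I_K,
    [/\ injective phi, forall i, phi i \notin S & forall i, phi i <= i + size S].
Proof.
move=> kSK; set S' := map val S.
pose A := [seq x <- iota 0 K | x \notin S'].
have count_S : count (mem S') (iota 0 K) <= size S.
  rewrite -size_filter -(size_map val S); apply: uniq_leq_size.
    by rewrite filter_uniq ?iota_uniq.
  by move=> x; rewrite mem_filter => /andP [].
have size_A : k <= size A.
  have := count_predC (mem S') (iota 0 K); rewrite size_iota /A size_filter.
  by rewrite [count (predC _) _](eq_count (a2 := fun x => x \notin S')) //; lia.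
have A_i (i : 'I_k) : i < size A := leq_trans (ltn_ord i) size_A.
have A_lt (i : 'I_k) : nth 0 A i < K.
  by have := mem_nth 0 (A_i i); rewrite mem_filter mem_iota => /and3P [].
exists (fun i => Ordinal (A_lt i)); split.
- move=> i j /(congr1 val) /= /eqP.
  by rewrite nth_uniq ?filter_uniq ?iota_uniq ?A_i // => /eqP /val_inj.
- move=> i; have := mem_nth 0 (A_i i); rewrite mem_filter => /andP [+ _].
  by apply: contra => /(map_f val).
- move=> i /=; apply: leq_trans (nth_filter_iota_le (A_i i)) _.
  by rewrite add0n leq_add2l [count _ _](eq_count (a2 := mem S')) // => x /=; rewrite negbK.
Qed.

Section RedStarMatching.
Variables (k : nat) (l : nat -> nat) (c : {set Bvert k l} -> bool).

Definition red_star (p : 'I_k * Bvert k l) : bool :=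
  Bbase (inl (inl p.1)) p.2 && c [set inl (inl p.1); p.2].

Definition red_star_matching (ms : seq ('I_k * Bvert k l)) : bool :=
  [&& all red_star ms, uniq (map fst ms) & uniq (map snd ms)].

Lemma red_part_BC (x y : Bvert k l) :
  red_part (B_rel k l) c x y = red_part (B_rel k l) c y x.
Proof. by rewrite /red_part B_relC setUC. Qed.

Lemma blue_part_BC (x y : Bvert k l) :
  blue_part (B_rel k l) c x y = blue_part (B_rel k l) c y x.
Proof. by rewrite /blue_part B_relC setUC. Qed.

Lemma red_star_matching_copy ms :
  red_star_matching ms -> has_copy (matching_rel (size ms)) (red_part (B_rel k l) c).
Proof.
case/and3P => /allP ms_red fst_uniq snd_uniq.
pose p := tnth (in_tuple ms).
have p_red i : red_star (p i) by apply/ms_red/mem_tnth.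
have fst_inj : injective (fun i => (p i).1).
  by move=> i j; have := elimT (tuple_uniqP (map_tuple fst (in_tuple ms))) fst_uniq i j;
    rewrite !tnth_map.
have snd_inj : injective (fun i => (p i).2).
  by move=> i j; have := elimT (tuple_uniqP (map_tuple snd (in_tuple ms))) snd_uniq i j;
    rewrite !tnth_map.
exists (fun ib => if ib.2 then (p ib.1).2 else inl (inl (p ib.1).1)); split.
  move=> [i [|]] [j [|]] /=; first by move/snd_inj ->.
  - by move=> pij; have := p_red i; rewrite /red_star pij.
  - by move=> pij; have := p_red j; rewrite /red_star -pij.
  - by move=> [/fst_inj ->].
move=> [i b] [_ b'] /andP [/= /eqP <-]; have /andP [p_B p_c] := p_red i.
suff red_i : red_part (B_rel k l) c (inl (inl (p i).1)) (p i).2.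
  by case: b b' => [] [] //= _; rewrite // red_part_BC.
by rewrite /red_part /B_rel p_B p_c.
Qed.

End RedStarMatching.

Section BEmbedding.
Variables (k K : nat) (l L : nat -> nat) (phi psi : 'I_k -> 'I_K).
Hypothesis l_le : forall i : 'I_k, l i <= L (phi i).

Definition B_map (x : Bvert k l) : Bvert K L :=
  match x with
  | inl (inl i) => inl (inl (phi i))
  | inl (inr j) => inl (inr (psi j))
  | inr (existT i a) => inr (Tagged (fun x : 'I_K => 'I_(L x)) (widen_ord (l_le i) a))
  end.

Lemma B_map_inj : injective phi -> injective psi -> injective B_map.
Proof.
move=> phi_inj psi_inj [[i|i]|[i a]] [[j|j]|[j b]] //=.
- by move=> [/phi_inj ->].
- by move=> [/psi_inj ->].
pose leaf_val (z : Bvert K L) := if z is inr p then (val (tag p), val (tagged p)) else (0, 0).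
move=> /(congr1 leaf_val) [/val_inj/phi_inj ij]; subst j.
by move/val_inj ->.
Qed.

Lemma Bbase_map x y : Bbase x y -> Bbase (B_map x) (B_map y).
Proof. by case: x y => [[i|i]|[i a]] [[j|j]|[j b]] //= /eqP ->. Qed.

End BEmbedding.

(* [x - s] truncates, so the first [s] vertices get [l 0] leaves. *)
Definition padl (s : nat) (l : nat -> nat) (x : nat) : nat := l (x - s).

Section PaddedB.
Variables (k s : nat) (l : nat -> nat).
Hypothesis l_noninc : forall i j, i <= j < k -> l j <= l i.

Section Colouring.
Variable c : {set Bvert (k + s) (padl s l)} -> bool.

Lemma blue_copy_of_maximal ms :
  red_star_matching c ms -> size ms <= s ->
  (forall x z, Bbase (inl (inl x)) z -> x \notin map fst ms -> z \notin map snd ms ->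
     ~~ c [set inl (inl x); z]) ->
  has_copy (B_rel k l) (blue_part (B_rel (k + s) (padl s l)) c).
Proof.
case/and3P => /allP ms_red _ _ size_ms maximal.
have fst_small : k + size (map fst ms) <= k + s by rewrite size_map leq_add2l.
have [phi [phi_inj phi_ms phi_le]] := exists_inj_avoiding fst_small.
pose get_inr (z : Bvert (k + s) (padl s l)) := if z is inl (inr y) then Some y else None.
have snd_small : k + size (pmap get_inr (map snd ms)) <= k + s.
  by rewrite size_pmap leq_add2l (leq_trans (count_size _ _)) ?size_map.
have [psi [psi_inj psi_ms _]] := exists_inj_avoiding snd_small.
have l_le (i : 'I_k) : l i <= padl s l (phi i).
  by apply: l_noninc; have := phi_le i; have := ltn_ord i; rewrite size_map; lia.
have psi_ms' j : inl (inr (psi j)) \notin map snd ms.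
  by apply: contra (psi_ms j) => /(map_f get_inr); rewrite mem_pmap.
have leaf_ms (i : 'I_k) (a : 'I_(padl s l (phi i))) :
    inr (Tagged (fun x : 'I_(k + s) => 'I_(padl s l x)) a) \notin map snd ms.
  (* a red star ending at a leaf of [phi i] starts at the unmatched vertex [phi i] *)
  apply/mapP => -[[x z] xz_ms /= z_leaf].
  have := ms_red _ xz_ms; rewrite /red_star /= -z_leaf => /andP [/eqP /= x_phi _].
  by move: (phi_ms i); rewrite x_phi (map_f fst xz_ms).
exists (B_map psi l_le); split; first exact: B_map_inj.
set f := B_map psi l_le.
suff blue x y : Bbase x y -> blue_part (B_rel (k + s) (padl s l)) c (f x) (f y).
  by move=> x y /orP [/blue | /blue]; rewrite // blue_part_BC.
move=> xy; rewrite /blue_part /B_rel Bbase_map //=.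
case: x y xy => [[i|i]|[i a]] // [[j|j]|[j a]] //= => [_|/eqP ji]; apply: maximal => //.
by subst j; rewrite /= eqxx.
Qed.

Lemma greedy_red_or_blue n ms :
  red_star_matching c ms -> size ms + n = s.+1 ->
  has_copy (matching_rel s.+1) (red_part (B_rel (k + s) (padl s l)) c) \/
  has_copy (B_rel k l) (blue_part (B_rel (k + s) (padl s l)) c).
Proof.
elim: n ms => [|n IH] ms ms_red size_ms.
  by left; rewrite -size_ms addn0; apply: red_star_matching_copy.
have [/existsP [x /existsP [z /and4P [xz x_ms z_ms c_xz]]]|no_ext] :=
  boolP [exists x, exists z, [&& Bbase (inl (inl x)) z, x \notin map fst ms,
                                 z \notin map snd ms & c [set inl (inl x); z]]].
  apply: (IH ((x, z) :: ms)); last by rewrite /= addSnnS.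
  case/and3P: ms_red => ms_red fst_uniq snd_uniq.
  by rewrite /red_star_matching /= /red_star xz c_xz ms_red x_ms z_ms fst_uniq snd_uniq.
right; apply: (blue_copy_of_maximal ms_red); first by move: size_ms; lia.
move=> x z xz x_ms z_ms; apply: contra no_ext => c_xz.
by apply/existsP; exists x; apply/existsP; exists z; rewrite xz x_ms z_ms c_xz.
Qed.

End Colouring.

Lemma arrows_padded_B :
  arrows (B_rel (k + s) (padl s l)) (matching_rel s.+1) (B_rel k l).
Proof. by move=> c; apply: (@greedy_red_or_blue c s.+1 [::]). Qed.

End PaddedB.

Lemma sum_padl k s l : \sum_(x < k + s) padl s l x = s * l 0 + \sum_(i < k) l i.
Proof.
rewrite -(big_mkord xpredT (padl s l)) (big_cat_nat _ (leq_addl k s)) //=.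
rewrite (eq_big_nat _ _ (F2 := fun _ => l 0)) => [|i /andP [_ lt_is]]; last first.
  by rewrite /padl; congr l; lia.
rewrite sum_nat_const_nat subn0 -{2}(add0n s) big_addn addnK big_mkord.
by congr (_ + _); apply: eq_bigr => i _; rewrite /padl addnK.
Qed.

Theorem proposition3p3 (k : nat) (l : nat -> nat) (t : nat) :
  2 <= k ->
  (forall i j, i <= j < k -> l j <= l i) ->
  1 <= t ->
  let n := 2 * k + \sum_(i < k) l i in
  (forall (V : finType) (e : rel V), simple_graph e ->
     arrows e (matching_rel t) (B_rel k l) ->
     (t - 1) * (k + l 0) + n + k * (k - 2) <= nedges e)
  /\
  (exists (V : finType) (e : rel V), simple_graph e /\
     arrows e (matching_rel t) (B_rel k l) /\
     nedges e <= n + (t - 1) * l 0 + (k + t - 1) ^ 2 - 2 * k).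
Proof.
move=> k_ge2 l_noninc; case: t => [//|s] _ n; rewrite subSS subn0.
have k_gt0 : 0 < k by lia.
have nedges_Bk : nedges (B_rel k l) = n + k * (k - 2).
  by rewrite nedges_B /n; case: k k_ge2 {k_gt0 l_noninc n} => [|[|k]] // _; nia.
split=> [V e e_simple e_arrows | ].
  set i0 := Ordinal k_gt0.
  apply: leq_trans (nedges_arrows (inl (inl i0)) (@B_nbr k l) e_simple e_arrows).
  by rewrite nedges_Bk addnA !leq_add2r leq_mul2l leq_deg_B orbT.
exists _, (B_rel (k + s) (padl s l)); split; first exact: simple_graph_B.
split; first exact: arrows_padded_B.
by rewrite nedges_B sum_padl /n addnS subn1 /=; nia.
Qed.
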